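(* Let $p\ge 7$ be a prime. Then (i) $\displaystyle\sum_{k=1}^{p-1}\frac{H_{k-1}}{k^3}\equiv \sum_{k=1}^{p-1}\frac{H_k}{k^3}\equiv 0\pmod{p}$; (ii) $\displaystyle\sum_{k=1}^{p-1}\frac{H_k^3}{k}\equiv\frac{3}{2}\sum_{k=1}^{p-1}\frac{H_k^2}{k^2}\pmod{p}$; (iii) $\displaystyle\sum_{k=1}^{p-1}\frac{H_{k-1,3}}{k}\equiv \sum_{k=1}^{p-1}\frac{H_{k,3}}{k}\equiv 0\pmod{p}$; (iv) $\displaystyle\sum_{k=1}^{p-1}\frac{H_k}{k^2}\equiv \sum_{k=1}^{p-1}\frac{H_k^2}{k}\pmod{p^2}$.
   Context: For positive integers $n,m$, $H_{n,m}=\sum_{k=1}^n 1/k^m$ and $H_n=H_{n,1}$; $H_0=H_{0,m}=0$. Congruences modulo $p^e$ are taken in the ring of rationals with denominators not divisible by $p$ ($a\equiv b\pmod{p^e}$ means $(a-b)/p^e$ is a rational with denominator prime to $p$). *)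

From HB Require Import structures.
From mathcomp Require Import all_boot all_order all_algebra.
Set Implicit Arguments. Unset Strict Implicit. Unset Printing Implicit Defensive.
Import Order.TTheory GRing.Theory Num.Theory.
Local Open Scope ring_scope.

Definition harm (n m : nat) : rat := \sum_(1 <= k < n.+1) 1 / (k%:R ^+ m).
Definition H (n : nat) : rat := harm n 1.

(* a == b (mod p^e) in Z_(p): (a - b)/p^e has denominator prime to p *)
Definition congr_mod (p e : nat) (a b : rat) : Prop :=
  ~~ (p%:Z %| denq ((a - b) / (p%:R ^+ e)))%Z.

(* A rational whose reduced denominator is prime to p ("p-integral") has a residue
   in 'F_p, and reduction is a ring homomorphism. We encode this by the relation
   [reduces_to x a] and prove it is closed under sums, products, powers, inverses of
   units and finite sums; two p-integral rationals with equal residues are congruent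
   modulo p. Parts (i)-(iii) thereby become identities in 'F_p about the harmonic
   numbers [harmF m k] = H_{k,m} mod p, proved with three facts:
   - reflection k |-> p - k: H_{p-k,m} = H_{k-1,m} in 'F_p for odd m;
   - \sum_{0<k<p} k^{-4} = 0 in 'F_p for p > 5 (Faulhaber's formula for i^4);
   - hence for odd m, m' with m + m' = 4 the sum \sum H_{k,m}/k^{m'} equals its own
     opposite, which gives (i), (iii), and after expanding (H_k - 1/k)^3 also (ii).
   For (iv), the identity H_n^3 = 3 \sum H_k^2/k - 3 \sum H_k/k^2 + H_{n,3} reduces
   the claim to H_{p-1} = 0 (mod p) and H_{p-1,3} = 0 (mod p^2); both follow by pairing
   k with p - k in the rationals and reducing the paired sums modulo p. *)

From mathcomp Require Import all_boot all_order all_algebra.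
From mathcomp Require Import zify ring.
Import GRing.Theory Num.Theory.
Set Implicit Arguments. Unset Strict Implicit. Unset Printing Implicit Defensive.
Local Open Scope ring_scope.

Lemma sum_reflect (R : nmodType) (n : nat) (F : nat -> R) :
  \sum_(1 <= k < n) F k = \sum_(1 <= k < n) F (n - k)%N.
Proof. by rewrite big_nat_rev; apply: eq_bigr => k _; congr F; lia. Qed.

Lemma sum_pair (R : nmodType) (n : nat) (F : nat -> R) :
  (\sum_(1 <= k < n) F k) *+ 2 = \sum_(1 <= k < n) (F k + F (n - k)%N).
Proof. by rewrite mulr2n {2}sum_reflect big_split. Qed.

Lemma exprN_odd (R : pzRingType) (x : R) (m : nat) : odd m -> (- x) ^+ m = - x ^+ m.
Proof. by move=> om; rewrite exprNn -signr_odd om mulN1r. Qed.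

Lemma sum_pow4 (R : comPzRingType) (n : nat) :
  30%:R * \sum_(i < n) (i%:R : R) ^+ 4 =
  n%:R * (n%:R - 1) * (2%:R * n%:R - 1) * (3%:R * n%:R ^+ 2 - 3%:R * n%:R - 1).
Proof.
elim: n => [|n IH]; first by rewrite big_ord0 mulr0 !mul0r.
by rewrite big_ord_recr /= mulrDr IH -addn1 natrD; ring.
Qed.

Lemma harm_cube (n : nat) : H n ^+ 3 =
  3%:R * \sum_(1 <= k < n.+1) H k ^+ 2 / k%:R
  - 3%:R * \sum_(1 <= k < n.+1) H k / k%:R ^+ 2 + harm n 3.
Proof.
elim: n => [|n IH]; first by rewrite /H /harm !big_geq // expr0n mulr0 subrr addr0.
have H_step : H n.+1 = H n + n.+1%:R^-1 by rewrite /H /harm big_nat_recr //= expr1 div1r.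
have H3_step : harm n.+1 3 = harm n 3 + (n.+1%:R ^+ 3)^-1.
  by rewrite /harm big_nat_recr //= div1r.
have n1 : (1 + n%:R : rat) != 0 by rewrite addrC natr1 pnatr_eq0.
rewrite (big_nat_recr n.+1) // (big_nat_recr n.+1) //= H3_step H_step.
rewrite (_ : harm n 3 = H n ^+ 3 - 3%:R * \sum_(1 <= k < n.+1) H k ^+ 2 / k%:R
  + 3%:R * \sum_(1 <= k < n.+1) H k / k%:R ^+ 2); first by field.
by rewrite IH; ring.
Qed.

Lemma harm_pair (n m : nat) (G : nat -> rat) : (0 < n)%N ->
  (forall k, (0 < k < n)%N -> 1 / k%:R ^+ m + 1 / (n - k)%:R ^+ m = n%:R * G k) ->
  2%:R * harm n.-1 m = n%:R * \sum_(1 <= k < n) G k.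
Proof.
move=> n0 pairG; rewrite /harm prednK // mulr_natl sum_pair mulr_sumr.
exact: eq_big_nat.
Qed.

Definition pair_inv (n k : nat) : rat := ((k * (n - k))%:R)^-1.

Lemma harm1_pair (n : nat) : (0 < n)%N ->
  2%:R * harm n.-1 1 = n%:R * \sum_(1 <= k < n) pair_inv n k.
Proof.
move=> n0; apply: harm_pair => // k /andP [k0 kn].
have kQ : (k%:R : rat) != 0 by rewrite pnatr_eq0 -lt0n.
have nkQ : ((n - k)%:R : rat) != 0 by rewrite pnatr_eq0 subn_eq0 -ltnNge.
rewrite /pair_inv natrM; move: nkQ; rewrite natrB ?(ltnW kn) // => nkQ.
by field; rewrite kQ nkQ.
Qed.

(* 1/k^3 + 1/(n-k)^3 = n (n^2 - 3 k (n-k)) / (k (n-k))^3. *)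
Lemma harm3_pair (n : nat) : (0 < n)%N ->
  2%:R * harm n.-1 3 =
  n%:R * \sum_(1 <= k < n) (n%:R ^+ 2 * pair_inv n k ^+ 3 - 3%:R * pair_inv n k ^+ 2).
Proof.
move=> n0; apply: harm_pair => // k /andP [k0 kn].
have kQ : (k%:R : rat) != 0 by rewrite pnatr_eq0 -lt0n.
have nkQ : ((n - k)%:R : rat) != 0 by rewrite pnatr_eq0 subn_eq0 -ltnNge.
rewrite /pair_inv natrM; move: nkQ; rewrite natrB ?(ltnW kn) // => nkQ.
by field; rewrite kQ nkQ.
Qed.

Section ModP.
Variable p : nat.
Hypothesis p_prime : prime p.

Definition p_integral (x : rat) : bool := ~~ (p%:Z %| denq x)%Z.

(* The reduction modulo p of x, meaningful when x is p-integral. *)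
Definition red (x : rat) : 'F_p := (numq x)%:~R / (denq x)%:~R.

Definition reduces_to (x : rat) (a : 'F_p) : Prop := p_integral x /\ red x = a.

Lemma dvdz_Fp (n : int) : (p%:Z %| n)%Z = ((n%:~R : 'F_p) == 0).
Proof. exact: dvdz_pcharf (pchar_Fp p_prime) n. Qed.

Lemma natr_Fp_eq0 (k : nat) : ((k%:R : 'F_p) == 0) = (p %| k)%N.
Proof. by rewrite (dvdn_pcharf (pchar_Fp p_prime)). Qed.

Lemma numq_cross (x : rat) (n d : int) : d != 0 -> x = n%:~R / d%:~R ->
  numq x * d = n * denq x.
Proof.
move=> d0 ex; apply: (@intr_inj rat).
by rewrite !intrM numqE [in X in X * _ * _]ex mulrAC divfK ?intr_eq0.
Qed.

Lemma denq_dvdz (x : rat) (n d : int) : d != 0 -> x = n%:~R / d%:~R ->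
  (denq x %| d)%Z.
Proof.
move=> d0 ex; have cross := numq_cross d0 ex.
have cop : coprimez (denq x) (numq x).
  by rewrite coprimez_sym coprimezE coprime_num_den.
by rewrite -(Gauss_dvdzr _ cop) cross dvdz_mull.
Qed.

Lemma reduces_frac (n d : int) : (d%:~R : 'F_p) != 0 ->
  reduces_to (n%:~R / d%:~R) (n%:~R / d%:~R).
Proof.
move=> dF; have d0 : d != 0 by apply: contraNneq dF => ->.
set x := _ / _.
have /dvdzP [q dq] := denq_dvdz d0 (erefl x).
have dxF : ((denq x)%:~R : 'F_p) != 0.
  by apply: contraNneq dF; rewrite dq intrM => ->; rewrite mulr0.
split; first by rewrite /p_integral dvdz_Fp.
by apply/eqP; rewrite /red eqr_div // -!intrM (numq_cross d0 (erefl x)).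
Qed.

Lemma reduces_fracP x a : reduces_to x a <->
  exists n d : int, [/\ (d%:~R : 'F_p) != 0, x = n%:~R / d%:~R & a = n%:~R / d%:~R].
Proof.
split=> [[px <-] | [n [d [dF -> ->]]]]; last exact: reduces_frac.
by exists (numq x), (denq x); rewrite -dvdz_Fp divq_num_den.
Qed.

Lemma intrQ_neq0 (d : int) : (d%:~R : 'F_p) != 0 -> (d%:~R : rat) != 0.
Proof. by move=> dF; rewrite intr_eq0; apply: contraNneq dF => ->. Qed.

Lemma reduces_int (n : int) : reduces_to n%:~R n%:~R.
Proof. by have := @reduces_frac n 1; rewrite !divr1; apply; exact: oner_neq0. Qed.

Lemma reduces_nat (n : nat) : reduces_to n%:R n%:R.
Proof. exact: reduces_int n. Qed.

Lemma reducesD x y a b :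
  reduces_to x a -> reduces_to y b -> reduces_to (x + y) (a + b).
Proof.
move=> /reduces_fracP [n1 [d1 [d1F -> ->]]] /reduces_fracP [n2 [d2 [d2F -> ->]]].
apply/reduces_fracP; exists (n1 * d2 + n2 * d1), (d1 * d2).
by rewrite !intrD !intrM mulf_neq0 // !addf_div ?intrQ_neq0.
Qed.

Lemma reducesM x y a b :
  reduces_to x a -> reduces_to y b -> reduces_to (x * y) (a * b).
Proof.
move=> /reduces_fracP [n1 [d1 [d1F -> ->]]] /reduces_fracP [n2 [d2 [d2F -> ->]]].
apply/reduces_fracP; exists (n1 * n2), (d1 * d2).
by rewrite !intrM mulf_neq0 // !mulf_div.
Qed.

Lemma reducesN x a : reduces_to x a -> reduces_to (- x) (- a).
Proof. by move=> rx; rewrite -mulN1r -[- a]mulN1r; apply: reducesM (reduces_int (-1)) rx. Qed.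

Lemma reducesB x y a b :
  reduces_to x a -> reduces_to y b -> reduces_to (x - y) (a - b).
Proof. by move=> rx ry; apply: reducesD rx (reducesN ry). Qed.

Lemma reducesX x a m : reduces_to x a -> reduces_to (x ^+ m) (a ^+ m).
Proof.
move=> rx; elim: m => [|m IH]; first exact: reduces_nat 1.
by rewrite !exprS; apply: reducesM.
Qed.

Lemma reducesV x a : reduces_to x a -> a != 0 -> reduces_to x^-1 a^-1.
Proof.
move=> /reduces_fracP [n [d [dF -> ->]]] a0.
have nF : (n%:~R : 'F_p) != 0 by apply: contraNneq a0 => ->; rewrite mul0r.
by apply/reduces_fracP; exists d, n; rewrite !invf_div.
Qed.

Lemma reduces_sum (m n : nat) (F : nat -> rat) (G : nat -> 'F_p) :
  (forall i, (m <= i < n)%N -> reduces_to (F i) (G i)) ->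
  reduces_to (\sum_(m <= i < n) F i) (\sum_(m <= i < n) G i).
Proof.
move=> FG; rewrite !big_seq; apply: (big_ind2 reduces_to) => //.
- exact: reduces_nat 0.
- by move=> x1 a1 x2 a2; apply: reducesD.
- by move=> i; rewrite mem_index_iota; apply: FG.
Qed.

Lemma reduces_inv_pow (j m : nat) : ~~ (p %| j)%N ->
  reduces_to (j%:R ^+ m)^-1 (j%:R ^+ m)^-1.
Proof.
move=> pj; apply: reducesV; first exact/reducesX/reduces_nat.
by rewrite expf_neq0 // natr_Fp_eq0.
Qed.

Lemma reduces0_div x : reduces_to x 0 -> p_integral (x / p%:R).
Proof.
move=> /reduces_fracP [n [d [dF ex nd0]]].
have : (n%:~R : 'F_p) == 0 by move/esym/eqP: nd0; rewrite mulf_eq0 invr_eq0 (negbTE dF) orbF.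
rewrite -dvdz_Fp => /dvdzP [q nq].
have p0 : (p%:R : rat) != 0 by rewrite pnatr_eq0 -lt0n prime_gt0.
have [pq _] := reduces_frac q dF.
suff -> : x / p%:R = q%:~R / d%:~R by [].
by rewrite ex nq intrM; field; rewrite p0 intrQ_neq0.
Qed.

Lemma p_integral_reduces x : p_integral x -> reduces_to x (red x).
Proof. by []. Qed.

Lemma congr_mod1 x y c : reduces_to x c -> reduces_to y c -> congr_mod p 1 x y.
Proof.
move=> rx ry; rewrite /congr_mod expr1; apply: reduces0_div.
by have := reducesB rx ry; rewrite subrr.
Qed.

Definition harmF (m k : nat) : 'F_p := \sum_(1 <= j < k.+1) 1 / (j%:R ^+ m).

Lemma harmF_step m k : (0 < k)%N -> harmF m k = harmF m k.-1 + 1 / (k%:R ^+ m).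
Proof. by case: k => // k _; rewrite /harmF big_nat_recr. Qed.

Lemma reduces_harm m k : (k < p)%N -> reduces_to (harm k m) (harmF m k).
Proof.
move=> kp; apply: reduces_sum => j /andP [j1 jk]; rewrite !div1r.
by apply: reduces_inv_pow => //; rewrite gtnNdvd //; apply: leq_ltn_trans kp.
Qed.

Lemma reduces_harm_term m a b j k : (j < p)%N -> (0 < k < p)%N ->
  reduces_to (harm j m ^+ a / k%:R ^+ b) (harmF m j ^+ a / k%:R ^+ b).
Proof.
move=> jp /andP [k0 kp]; apply: reducesM; first exact/reducesX/reduces_harm.
by apply: reduces_inv_pow; rewrite gtnNdvd.
Qed.

Lemma natr_Fp_reflect k : (k <= p)%N -> ((p - k)%:R : 'F_p) = - k%:R.
Proof. by move=> kp; rewrite natrB // pchar_Fp_0 // sub0r. Qed.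

Lemma natr_Fp_neq0 k : (0 < k < p)%N -> (k%:R : 'F_p) != 0.
Proof. by move=> /andP [k0 kp]; rewrite natr_Fp_eq0 // gtnNdvd. Qed.

(* In 'F_p, k (p - k) = - k^2, so 1 / (k (p - k)) reduces to - 1 / k^2. *)
Lemma reduces_pair_inv k : (0 < k < p)%N -> reduces_to (pair_inv p k) (- (k%:R ^+ 2)^-1).
Proof.
move=> /andP [k0 kp].
have pk : ~~ (p %| k * (p - k))%N.
  by rewrite Euclid_dvdM // negb_or !gtnNdvd ?subn_gt0 ?ltn_subrL ?k0 ?prime_gt0.
have := reduces_inv_pow 1 pk; rewrite !expr1 => -[pint red_eq].
split; first exact: pint.
by rewrite /pair_inv red_eq natrM natr_Fp_reflect ?(ltnW kp) // mulrN invrN expr2.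
Qed.

Section OddCharacteristic.
Hypothesis p_gt2 : (2 < p)%N.

Lemma two_Fp_neq0 : (2%:R : 'F_p) != 0.
Proof. by rewrite natr_Fp_neq0 // (ltn_trans _ p_gt2). Qed.

Lemma eq_opp_Fp (x : 'F_p) : x = - x -> x = 0.
Proof.
move=> e; have : 2%:R * x == 0 by rewrite mulr_natl mulr2n {1}e addNr.
by rewrite mulf_eq0 (negbTE two_Fp_neq0) => /eqP.
Qed.

(* H_{p-1,m} vanishes modulo p for odd m: reflect the sum through k |-> p - k. *)
Lemma harmF_full m : odd m -> harmF m p.-1 = 0.
Proof.
move=> om; apply: eq_opp_Fp; rewrite /harmF prednK ?prime_gt0 //.
rewrite {1}sum_reflect -sumrN; apply: eq_big_nat => k /andP [_ kp].
by rewrite natr_Fp_reflect ?(ltnW kp) // exprN_odd // !div1r invrN.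
Qed.

Lemma harmF_reflect m k : odd m -> (0 < k <= p)%N -> harmF m (p - k) = harmF m k.-1.
Proof.
move=> om; elim: k => [//|k IH] /andP [_ kp].
have [->|k0] := posnP k; first by rewrite subn1 harmF_full // /harmF big_geq.
have pk : (0 < p - k)%N by rewrite subn_gt0.
rewrite (harmF_step _ k0) -IH ?k0 ?(ltnW kp) // (harmF_step _ pk) -subnS /=.
by rewrite natr_Fp_reflect ?(ltnW kp) // exprN_odd // !div1r invrN subrK.
Qed.

(* Wolstenholme-type congruence: H_{p-1} = 0 (mod p), from 2 H_{p-1} = p \sum 1/(k (p-k)). *)
Lemma wolstenholme1 : p_integral (H p.-1 / p%:R).
Proof.
have P0 : (p%:R : rat) != 0 by rewrite pnatr_eq0 -lt0n prime_gt0.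
have -> : H p.-1 / p%:R = (\sum_(1 <= k < p) pair_inv p k) / 2%:R.
  apply: (mulfI (_ : 2%:R != 0 :> rat)) => //.
  by rewrite mulrA harm1_pair ?prime_gt0 //; field.
have := reducesM (reduces_sum (fun k hk => reduces_pair_inv hk))
                 (reducesV (reduces_nat 2) two_Fp_neq0).
by case.
Qed.

End OddCharacteristic.

Lemma sum_Fp (G : 'F_p -> 'F_p) : \sum_(x : 'F_p) G x = \sum_(0 <= i < p) G i%:R.
Proof.
have -> : \sum_(x : 'F_p) G x = \sum_(i < (Zp_trunc (pdiv p)).+2) G i%:R.
  by apply: eq_bigr => i _; rewrite natr_Zp.
rewrite -(big_mkord xpredT (fun i => G i%:R)).
have cast n : n = p -> \sum_(0 <= i < n) G i%:R = \sum_(0 <= i < p) G i%:R by move->.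
exact: cast (Fp_cast p_prime).
Qed.

Section LargeCharacteristic.
Hypothesis p_gt5 : (5 < p)%N.

Let p_gt2 : (2 < p)%N.
Proof. exact: ltn_trans p_gt5. Qed.

(* \sum_{0<k<p} k^{-4} = 0 in 'F_p: inversion permutes the units, and
   30 \sum_{i<p} i^4 = 0 by Faulhaber's formula, with 30 a unit as p > 5. *)
Lemma sum_inv4 : \sum_(1 <= k < p) (k%:R : 'F_p) ^- 4 = 0.
Proof.
have -> : \sum_(1 <= k < p) (k%:R : 'F_p) ^- 4 = \sum_(x : 'F_p) x^-1 ^+ 4.
  rewrite sum_Fp [RHS]big_ltn ?prime_gt0 // invr0 expr0n add0r.
  by apply: eq_bigr => k _; rewrite exprVn.
rewrite (reindex_inj (@invr_inj _)) /=.
under eq_bigr do rewrite invrK.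
rewrite sum_Fp big_mkord.
have /eqP : (30%:R : 'F_p) * \sum_(i < p) (i%:R : 'F_p) ^+ 4 = 0.
  by rewrite sum_pow4 pchar_Fp_0 // !mul0r.
rewrite mulf_eq0 natr_Fp_eq0 => /orP [|/eqP //].
rewrite (_ : 30 = 2 * (3 * 5))%N // !Euclid_dvdM //.
by case/or3P => /dvdn_leq; lia.
Qed.

(* For odd m, m' with m + m' = 4, both \sum H_{k,m}/k^{m'} and \sum H_{k-1,m}/k^{m'}
   vanish in 'F_p: they differ by \sum k^{-4} = 0, and reflection k |-> p - k
   shows that one is the opposite of the other. *)
Lemma mixed_sumsF m m' : odd m -> odd m' -> (m + m' = 4)%N ->
  \sum_(1 <= k < p) harmF m k.-1 / (k%:R ^+ m') = 0 /\
  \sum_(1 <= k < p) harmF m k / (k%:R ^+ m') = 0.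
Proof.
move=> om om' mm'.
set A := \sum_(1 <= k < p) _; set B := \sum_(1 <= k < p) _.
have BA : B = A.
  rewrite -[A]addr0 -sum_inv4 -big_split; apply: eq_big_nat => k /andP [k0 _].
  by rewrite (harmF_step _ k0) mulrDl !div1r -invfM -exprD mm'.
have BNA : B = - A.
  rewrite /B sum_reflect -sumrN; apply: eq_big_nat => k /andP [k0 kp].
  rewrite (harmF_reflect p_gt2) ?k0 ?(ltnW kp) // natr_Fp_reflect ?(ltnW kp) //.
  by rewrite exprN_odd // invrN mulrN.
have A0 : A = 0 by apply: (eq_opp_Fp p_gt2); rewrite -BNA.
by rewrite BA A0.
Qed.

(* \sum H_k^3/k = (3/2) \sum H_k^2/k^2 in 'F_p: reflecting the left-hand side and
   expanding H_{k-1}^3 = (H_k - 1/k)^3 leaves only these two sums. *)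
Lemma cube_sumF : \sum_(1 <= k < p) harmF 1 k ^+ 3 / k%:R =
  3%:R / 2%:R * \sum_(1 <= k < p) harmF 1 k ^+ 2 / (k%:R ^+ 2).
Proof.
set U := \sum_(1 <= k < p) _; set V := \sum_(1 <= k < p) _.
have [_ B0] := mixed_sumsF (m := 1) (m' := 3) isT isT erefl.
have reflU : U = \sum_(1 <= k < p) - (harmF 1 k ^+ 3 / k%:R
    - 3%:R * (harmF 1 k ^+ 2 / k%:R ^+ 2) + 3%:R * (harmF 1 k / k%:R ^+ 3) - k%:R ^- 4).
  rewrite /U sum_reflect; apply: eq_big_nat => k /andP [k0 kp].
  rewrite (harmF_reflect p_gt2) ?k0 ?(ltnW kp) // natr_Fp_reflect ?(ltnW kp) //.
  rewrite [harmF 1 k](harmF_step _ k0).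
  by field; rewrite oppr_eq0 natr_Fp_neq0 ?k0.
rewrite sumrN sumrB big_split sumrB /= -!mulr_sumr -/U -/V in reflU.
rewrite B0 sum_inv4 !mulr0 addr0 subr0 in reflU.
have two0 := two_Fp_neq0 p_gt2.
have twiceU : 2%:R * U = 3%:R * V by rewrite mulr_natl mulr2n {1}reflU; ring.
by apply: (mulfI two0); rewrite twiceU; field.
Qed.

(* Wolstenholme-type congruence: H_{p-1,3} = 0 (mod p^2). By pairing,
   2 H_{p-1,3} = p S with S = \sum (p^2 u_k^3 - 3 u_k^2), u_k = 1/(k (p-k)),
   and S reduces to -3 \sum k^{-4} = 0 modulo p. *)
Lemma wolstenholme3 : p_integral (harm p.-1 3 / p%:R ^+ 2).
Proof.
pose S := \sum_(1 <= k < p) (p%:R ^+ 2 * pair_inv p k ^+ 3 - 3%:R * pair_inv p k ^+ 2).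
have S0 : reduces_to S 0.
  rewrite -(mulr0 (- 3%:R)) -sum_inv4 mulr_sumr; apply: reduces_sum => k hk.
  have ru := reduces_pair_inv hk.
  have [pint red_eq] := reducesB (reducesM (reducesX 2 (reduces_nat p)) (reducesX 3 ru))
                                 (reducesM (reduces_nat 3) (reducesX 2 ru)).
  split; first exact: pint.
  by rewrite red_eq pchar_Fp_0 // expr0n mul0r sub0r sqrrN exprVn -exprM mulNr.
have P0 : (p%:R : rat) != 0 by rewrite pnatr_eq0 -lt0n prime_gt0.
have -> : harm p.-1 3 / p%:R ^+ 2 = S / p%:R / 2%:R.
  apply: (mulfI (_ : 2%:R != 0 :> rat)) => //.
  by rewrite mulrA harm3_pair ?prime_gt0 // -/S; field.
have := reducesM (p_integral_reduces (reduces0_div S0))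
                 (reducesV (reduces_nat 2) (two_Fp_neq0 p_gt2)).
by case.
Qed.

Lemma mixed_sums_mod_p m m' : odd m -> odd m' -> (m + m' = 4)%N ->
  congr_mod p 1 (\sum_(1 <= k < p) harm k.-1 m / k%:R ^+ m') 0 /\
  congr_mod p 1 (\sum_(1 <= k < p) harm k m / k%:R ^+ m') 0.
Proof.
move=> om om' mm'; have [A0 B0] := mixed_sumsF om om' mm'.
split; apply: (congr_mod1 (c := 0) _ (reduces_nat 0)); [rewrite -A0 | rewrite -B0];
  apply: reduces_sum => k hk;
  by apply: (reduces_harm_term m 1 m'); lia.
Qed.

Lemma cube_sum_mod_p :
  congr_mod p 1 (\sum_(1 <= k < p) H k ^+ 3 / k%:R)
                (3%:R / 2%:R * \sum_(1 <= k < p) H k ^+ 2 / k%:R ^+ 2).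
Proof.
apply: (congr_mod1 (c := \sum_(1 <= k < p) harmF 1 k ^+ 3 / k%:R)).
  by apply: reduces_sum => k hk; apply: (reduces_harm_term 1 3 1); lia.
rewrite cube_sumF; apply: reducesM.
  exact: reducesM (reduces_nat 3) (reducesV (reduces_nat 2) (two_Fp_neq0 p_gt2)).
by apply: reduces_sum => k hk; apply: (reduces_harm_term 1 2 2); lia.
Qed.

(* Part (iv): \sum H_k/k^2 = \sum H_k^2/k (mod p^2). By the cube identity their
   difference is (H_{p-1,3} - H_{p-1}^3)/3, and both terms vanish modulo p^2. *)
Lemma square_sums_mod_p2 :
  congr_mod p 2 (\sum_(1 <= k < p) H k / k%:R ^+ 2) (\sum_(1 <= k < p) H k ^+ 2 / k%:R).
Proof.
have P0 : (p%:R : rat) != 0 by rewrite pnatr_eq0 -lt0n prime_gt0.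
have cube := harm_cube p.-1; rewrite prednK ?prime_gt0 // in cube.
rewrite /congr_mod (_ : _ / _ =
  (harm p.-1 3 / p%:R ^+ 2 - p%:R * (H p.-1 / p%:R) ^+ 3) / 3%:R); last first.
  by rewrite expr_div_n cube; field.
have three_unit : (3%:R : 'F_p) != 0 by rewrite natr_Fp_neq0 // (ltn_trans _ p_gt5).
have := reducesM (reducesB (p_integral_reduces wolstenholme3)
                  (reducesM (reduces_nat p) (reducesX 3 (p_integral_reduces (wolstenholme1 p_gt2)))))
                 (reducesV (reduces_nat 3) three_unit).
by case.
Qed.

End LargeCharacteristic.
End ModP.

Theorem lemma2p3 (p : nat) (hp : prime p) (hp7 : (7 <= p)%N) :
  (* (i) *)
  (congr_mod p 1 (\sum_(1 <= k < p) H k.-1 / (k%:R ^+ 3)) 0 /\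
   congr_mod p 1 (\sum_(1 <= k < p) H k / (k%:R ^+ 3)) 0) /\
  (* (ii) *)
  congr_mod p 1 (\sum_(1 <= k < p) (H k) ^+ 3 / k%:R)
                ((3%:R / 2%:R) * \sum_(1 <= k < p) (H k) ^+ 2 / (k%:R ^+ 2)) /\
  (* (iii) *)
  (congr_mod p 1 (\sum_(1 <= k < p) harm k.-1 3 / k%:R) 0 /\
   congr_mod p 1 (\sum_(1 <= k < p) harm k 3 / k%:R) 0) /\
  (* (iv) *)
  congr_mod p 2 (\sum_(1 <= k < p) H k / (k%:R ^+ 2))
                (\sum_(1 <= k < p) (H k) ^+ 2 / k%:R).
Proof.
have p_gt5 : (5 < p)%N := ltnW hp7.
split; first exact: mixed_sums_mod_p hp p_gt5 1 3 isT isT erefl.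
split; first exact: cube_sum_mod_p hp p_gt5.
split; first exact: mixed_sums_mod_p hp p_gt5 3 1 isT isT erefl.
exact: square_sums_mod_p2 hp p_gt5.
Qed.
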